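(* Let $k\geq1$ and let $c_0,\dots,c_{k-1}$ be non-negative integers with $c_0\geq1$. Let $P(z)=z^k-\sum_{i=0}^{k-1}c_iz^i$, let $\eta_1,\dots,\eta_k$ be its complex roots listed with multiplicity, let $\varphi$ be its unique positive real root, let $g=\gcd(\{i:c_i\neq0\}\cup\{k\})$, and (when $k>g$) let $\psi$ be a root of largest absolute value among the roots with $|\eta|<\varphi$. Then for every positive integer $N$: (i) if $g\nmid N$, then $|\eta_1^N+\dots+\eta_k^N|\leq (k-g)|\psi|^N$; (ii) if $g\mid N$, then $|g\varphi^N-(\eta_1^N+\dots+\eta_k^N)|\leq (k-g)|\psi|^N$. (When $k=g$ the right-hand sides are to be read as $0$.) *)

From HB Require Import structures.
From mathcomp Require Import all_boot all_order all_algebra all_field.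
Set Implicit Arguments. Unset Strict Implicit. Unset Printing Implicit Defensive.
Import Order.TTheory GRing.Theory Num.Theory.
Local Open Scope ring_scope.

Definition charpoly_c (k : nat) (c : nat -> nat) : {poly algC} :=
  'X^k - \sum_(i < k) (c i)%:R *: 'X^i.

Definition gcd_supp (k : nat) (c : nat -> nat) : nat :=
  \big[gcdn/k]_(i < k | c i != 0%N) (i : nat).

Definition power_sum (rs : seq algC) (N : nat) : algC :=
  \sum_(r <- rs) r ^+ N.

(* Every root has modulus at most phi by the triangle inequality, and
   equality forces all nonzero terms c_i eta^i into the direction of the
   positive term c_0, so that eta / phi is a g-th root of unity.  Conversely
   phi * zeta is a root for each g-th root of unity zeta, and a simple one,
   since x P'(x) = sum_i c_i (k - i) x^i is positive there.  The g dominant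
   roots thus contribute phi^N * sum_j zeta^(jN) = [g | N] g phi^N to the
   power sum, and each of the remaining k - g roots at most |psi|^N. *)

From HB Require Import structures.
From mathcomp Require Import all_boot all_order all_algebra all_field.
From mathcomp Require Import ring.
Set Implicit Arguments.
Unset Strict Implicit.
Unset Printing Implicit Defensive.

Import Order.TTheory GRing.Theory Num.Theory.
Local Open Scope ring_scope.

Lemma expr_gcdn_eq1 (R : pzRingType) (u : R) a b :
  u ^+ a = 1 -> u ^+ b = 1 -> u ^+ gcdn a b = 1.
Proof.
move=> ua ub; have [->|a_gt0] := posnP a; first by rewrite gcd0n.
have [m n Bezout _] := egcdnP b a_gt0.
have : u ^+ (m * a) = 1 by rewrite mulnC exprM ua expr1n.
by rewrite Bezout exprD mulnC exprM ub expr1n mul1r.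
Qed.

Lemma sum_prim_root_expr (R : idomainType) n (z : R) N :
  n.-primitive_root z ->
  \sum_(j < n) (z ^+ N) ^+ j = if (n %| N)%N then n%:R else 0.
Proof.
move=> zn; have zn1 := prim_expr_order zn.
case: ifP => [/dvdnP[m ->] | n_ndvd_N].
  rewrite mulnC exprM zn1 expr1n.
  by rewrite (eq_bigr (fun=> 1)) ?sumr_const ?card_ord // => j _; rewrite expr1n.
have zN_neq1 : z ^+ N != 1.
  by rewrite -(expr0 z) (eq_prim_root_expr zn) mod0n -/(dvdn n N) n_ndvd_N.
have /eqP := subrX1 (z ^+ N) n; rewrite exprAC zn1 expr1n subrr eq_sym.
by rewrite mulf_eq0 subr_eq0 (negbTE zN_neq1) => /eqP.
Qed.

Lemma deriv_prod_XsubC_eq0 (R : comNzRingType) (rs : seq R) a :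
  (1 < count_mem a rs)%N -> (\prod_(r <- rs) ('X - r%:P))^`().[a] = 0.
Proof.
move=> a_mult.
have a_rs : a \in rs by rewrite -has_pred1 has_count ltnW.
have rs_perm := perm_to_rem a_rs.
have a_rem : a \in rem a rs.
  move/permP: rs_perm => /(_ (pred1 a)) /=; rewrite eqxx add1n => E.
  by rewrite -has_pred1 has_count -ltnS -E.
rewrite (perm_big _ rs_perm) big_cons (perm_big _ (perm_to_rem a_rem)) big_cons.
by rewrite !derivM !hornerE subrr /= !(mulr0, mul0r, add0r).
Qed.

Lemma norm_sum_expr_le (C : numDomainType) (s : seq C) (P : pred C) b N :
  {in s, forall r, P r -> `|r| <= b} ->
  `|\sum_(r <- s | P r) r ^+ N| <= (count P s)%:R * b ^+ N.
Proof.
move=> s_le; apply: le_trans (ler_norm_sum _ _ _) _.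
apply: (@le_trans _ _ (\sum_(r <- s | P r) b ^+ N)).
  rewrite big_seq_cond [X in _ <= X]big_seq_cond.
  apply: ler_sum => r /andP[r_s Pr]; rewrite normrX lerXn2r ?nnegrE ?s_le //.
  exact: le_trans (normr_ge0 r) (s_le r r_s Pr).
by rewrite big_const_seq iter_addr_0 mulr_natl.
Qed.

Section CharPolyC.
Variables (k : nat) (c : nat -> nat).
Local Notation P := (charpoly_c k c).
Local Notation g := (gcd_supp k c).

Lemma horner_charpoly_c x : P.[x] = x ^+ k - \sum_(i < k) (c i)%:R * x ^+ i.
Proof.
rewrite /charpoly_c hornerD hornerN hornerXn horner_sum; congr (_ - _).
by apply: eq_bigr => i _; rewrite hornerZ hornerXn.
Qed.

Lemma root_charpoly_c x : root P x = (x ^+ k == \sum_(i < k) (c i)%:R * x ^+ i).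
Proof. by rewrite /root horner_charpoly_c subr_eq0. Qed.

Lemma size_charpoly_c : size P = k.+1.
Proof.
rewrite /charpoly_c size_polyDl ?size_polyXn // size_polyN ltnS.
apply: (big_rec (fun p : {poly algC} => size p <= k)%N); first by rewrite size_poly0.
move=> i p _ hp; apply: leq_trans (size_polyD _ _) _; rewrite geq_max hp andbT.
by apply: leq_trans (size_scale_leq _ _) _; rewrite size_polyXn.
Qed.

Lemma dvdn_gcd_supp_k : (g %| k)%N.
Proof.
apply: (big_rec (fun d => d %| k)%N) => // i d _ dk.
exact: dvdn_trans (dvdn_gcdr _ _) dk.
Qed.

Lemma dvdn_gcd_supp (i : 'I_k) : c i != 0%N -> (g %| i)%N.
Proof. by move=> ci; rewrite /gcd_supp (bigD1 i) //= dvdn_gcdl. Qed.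

Lemma gcd_supp_gt0 : (0 < k)%N -> (0 < g)%N.
Proof.
move=> k_gt0; have := dvdn_gcd_supp_k; case: g => // /[!dvd0n] /eqP k0.
by rewrite k0 in k_gt0.
Qed.

Lemma expr_gcd_supp_eq1 {R : pzRingType} (u : R) :
  u ^+ g = 1 <-> u ^+ k = 1 /\ (forall i : 'I_k, c i != 0%N -> u ^+ i = 1).
Proof.
have expr_dvd d n : (d %| n)%N -> u ^+ d = 1 -> u ^+ n = 1.
  by move=> /dvdnP[m ->] ud; rewrite mulnC exprM ud expr1n.
split=> [ug | [uk ui]].
  by split=> [|i ci]; apply: expr_dvd ug; [exact: dvdn_gcd_supp_k | exact: dvdn_gcd_supp].
apply: (big_rec (fun d => u ^+ d = 1)) => // i d ci ud.
exact: expr_gcdn_eq1 (ui i ci) ud.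
Qed.

Lemma sum_supp_expr_rot (R : comPzRingType) (d : nat -> R) (x u : R) :
  u ^+ g = 1 -> (forall i, c i = 0%N -> d i = 0) ->
  \sum_(i < k) d i * (x * u) ^+ i = \sum_(i < k) d i * x ^+ i.
Proof.
move=> /expr_gcd_supp_eq1[_ ui] d_supp; apply: eq_bigr => i _.
have [ci0 | ci] := eqVneq (c i) 0%N; first by rewrite d_supp // !mul0r.
by rewrite exprMn ui // mulr1.
Qed.

Lemma root_charpoly_c_rot x u : root P x -> u ^+ g = 1 -> root P (x * u).
Proof.
move=> Px ug; have [uk _] := (expr_gcd_supp_eq1 u).1 ug.
rewrite root_charpoly_c exprMn uk mulr1 (@sum_supp_expr_rot _ (fun i => (c i)%:R)) //.
  by rewrite -root_charpoly_c.
by move=> i ->.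
Qed.

Lemma mul_deriv_charpoly_c x :
  root P x -> x * P^`().[x] = \sum_(i < k) (c i * (k - i))%:R * x ^+ i.
Proof.
have mul_deriv_expr n : x * (x ^+ n.-1 *+ n) = n%:R * x ^+ n.
  by case: n => [|n]; rewrite ?mulr0n ?mulr0 ?mul0r // mulrnAr -exprS mulr_natl.
rewrite root_charpoly_c => /eqP Px.
rewrite /charpoly_c derivB derivXn raddf_sum hornerD hornerN hornerMn hornerXn.
rewrite horner_sum mulrBr mulr_sumr mul_deriv_expr Px mulr_sumr -sumrB.
apply: eq_bigr => i _; rewrite /= derivZ derivXn hornerZ hornerMn hornerXn.
by rewrite [x * _]mulrCA mul_deriv_expr natrM natrB 1?ltnW //; ring.
Qed.

Variable phi : algC.
Hypotheses (k_gt0 : (0 < k)%N) (c0_gt0 : (0 < c 0%N)%N).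
Hypotheses (phi_gt0 : 0 < phi) (phi_root : root P phi).

Let i0 : 'I_k := Ordinal k_gt0.

Lemma charpoly_c_sum_lt r : phi < r -> \sum_(i < k) (c i)%:R * r ^+ i < r ^+ k.
Proof.
move=> phi_lt_r; have := phi_root; rewrite root_charpoly_c => /eqP Pphi.
set s := r / phi.
have r_eq : r = phi * s by rewrite /s mulrC divfK ?gt_eqF.
have s_gt1 : 1 < s by rewrite /s ltr_pdivlMr // mul1r.
have s_ge0 : 0 <= s by rewrite ltW // (lt_trans ltr01).
have sk_gt1 : 1 < s ^+ k by rewrite -(expr1n _ k) ltrXn2r // ?gtn_eqF // ?nnegrE.
have -> : r ^+ k = \sum_(i < k) (c i)%:R * phi ^+ i * s ^+ k.
  by rewrite -mulr_suml -Pphi r_eq exprMn.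
rewrite (bigD1 i0) //= [X in _ < X](bigD1 i0) //= !expr0 !mulr1.
apply: ltr_leD; first by rewrite -[X in X < _]mulr1 ltr_pM2l // ltr0n.
apply: ler_sum => i _; rewrite r_eq exprMn mulrA ler_wpM2l //.
  by rewrite mulr_ge0 ?ler0n // exprn_ge0 // ltW.
by rewrite ler_weXn2l // ?ltW // ltnW.
Qed.

Lemma norm_root_charpoly_c_le eta : root P eta -> `|eta| <= phi.
Proof.
rewrite root_charpoly_c => /eqP Peta.
have triangle : `|eta| ^+ k <= \sum_(i < k) (c i)%:R * `|eta| ^+ i.
  rewrite -normrX Peta; apply: le_trans (ler_norm_sum _ _ _) _.
  by under eq_bigr do rewrite normrM normr_nat normrX.
rewrite real_leNgt ?normr_real ?gtr0_real //; apply/negP => phi_lt.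
by have := le_lt_trans triangle (charpoly_c_sum_lt phi_lt); rewrite ltxx.
Qed.

Lemma norm_root_charpoly_c_eq eta :
  root P eta -> `|eta| = phi -> (eta / phi) ^+ g = 1.
Proof.
rewrite root_charpoly_c => /eqP Peta eta_phi.
have := phi_root; rewrite root_charpoly_c => /eqP Pphi.
have norm_term i : `|(c i)%:R * eta ^+ i| = (c i)%:R * phi ^+ i.
  by rewrite normrM normr_nat normrX eta_phi.
have sum_norm : `|\sum_(i < k) (c i)%:R * eta ^+ i| =
                  \sum_(i < k) `|(c i)%:R * eta ^+ i|.
  rewrite -Peta normrX eta_phi Pphi.
  by apply: eq_bigr => i _; rewrite norm_term.
have [t _ t_dir] := normC_sum_eq sum_norm.
(* the term i = 0 is the positive real c_0, so the common direction is 1 *)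
have t1 : t = 1.
  have /eqP := t_dir i0 isT; rewrite norm_term /= !expr0 !mulr1 -subr_eq0.
  rewrite -{1}[_%:R]mulr1 -mulrBr mulf_eq0 pnatr_eq0.
  by rewrite eqn0Ngt c0_gt0 /= subr_eq0 eq_sym => /eqP.
have term_eq (i : 'I_k) : (c i)%:R * eta ^+ i = (c i)%:R * phi ^+ i :> algC.
  by rewrite t_dir // norm_term t1 mulr1.
have phi_neq0 : phi != 0 by rewrite gt_eqF.
apply/expr_gcd_supp_eq1; rewrite !expr_div_n; split=> [|i ci].
  have -> : eta ^+ k = phi ^+ k by rewrite Peta Pphi; apply: eq_bigr => i _.
  by rewrite divff // expf_neq0.
by rewrite expr_div_n (mulfI _ (term_eq i)) ?pnatr_eq0 // divff // expf_neq0.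
Qed.

Lemma deriv_charpoly_c_rot_neq0 u : u ^+ g = 1 -> P^`().[phi * u] != 0.
Proof.
move=> ug; have := mul_deriv_charpoly_c (root_charpoly_c_rot phi_root ug).
rewrite (@sum_supp_expr_rot _ (fun i => (c i * (k - i))%:R)) => [xP'x||i ->] //.
have sum_gt0 : 0 < \sum_(i < k) (c i * (k - i))%:R * phi ^+ i.
  rewrite (bigD1 i0) //= ltr_wpDr //.
    apply: sumr_ge0 => i _; apply: mulr_ge0; first exact: ler0n.
    by rewrite exprn_ge0 // ltW.
  by rewrite expr0 mulr1 ltr0n muln_gt0 c0_gt0 subn0.
by apply: contraTneq sum_gt0 => P'0; rewrite -xP'x P'0 mulr0 ltxx.
Qed.

Variable rs : seq algC.
Hypothesis P_roots : P = \prod_(r <- rs) ('X - r%:P).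

Lemma mem_charpoly_c_roots x : (x \in rs) = root P x.
Proof. by rewrite P_roots root_prod_XsubC. Qed.

Lemma size_charpoly_c_roots : size rs = k.
Proof.
have := size_prod_XsubC rs id; rewrite /= -P_roots size_charpoly_c.
by case.
Qed.

Lemma norm_subdominant_root_lt r : r \in rs -> `|r| != phi -> `|r| < phi.
Proof.
by rewrite mem_charpoly_c_roots lt_neqAle => /norm_root_charpoly_c_le -> ->.
Qed.

Lemma perm_dominant_roots z : g.-primitive_root z ->
  perm_eq [seq r <- rs | `|r| == phi] [seq phi * z ^+ j | j <- iota 0 g].
Proof.
move=> zg; have zg1 := prim_expr_order zg.
have phi_neq0 : phi != 0 by rewrite gt_eqF.
have unity_j j : (z ^+ j) ^+ g = 1 by rewrite exprAC zg1 expr1n.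
have uniq_rot : uniq [seq phi * z ^+ j | j <- iota 0 g].
  rewrite map_inj_in_uniq ?iota_uniq // => i j.
  rewrite !mem_iota !add0n => /andP[_ ig] /andP[_ jg] /(mulfI phi_neq0)/eqP.
  by rewrite (eq_prim_root_expr zg) !modn_small // => /eqP.
have mem_dom x : (x \in [seq r <- rs | `|r| == phi]) =
                 (x \in [seq phi * z ^+ j | j <- iota 0 g]).
  rewrite mem_filter mem_charpoly_c_roots; apply/andP/mapP => [[/eqP x_phi Px]|].
    have [j xj] := prim_rootP zg (norm_root_charpoly_c_eq Px x_phi).
    by exists (val j); rewrite ?mem_iota //= -xj mulrC divfK.
  move=> [j _ ->]; split; last exact: root_charpoly_c_rot.
  have /eqP z1 : `|z| == 1 by rewrite -(pexpr_eq1 (prim_order_gt0 zg)) // -normrX zg1 normr1.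
  by rewrite normrM normrX z1 expr1n mulr1 gtr0_norm.
apply: uniq_perm => //; apply: count_mem_uniq => x.
have [x_dom | /count_memPn //] := boolP (x \in _).
apply/eqP; rewrite eqn_leq -has_count has_pred1 x_dom andbT.
have /mapP[j _ x_eq] : x \in [seq phi * z ^+ j | j <- iota 0 g] by rewrite -mem_dom.
apply: (@leq_trans (count_mem x rs)).
  by rewrite count_filter; apply: sub_count => y /andP[].
rewrite leqNgt; apply: contra (deriv_charpoly_c_rot_neq0 (unity_j j)) => x_mult.
by rewrite -x_eq P_roots deriv_prod_XsubC_eq0.
Qed.

Lemma count_subdominant_roots : count (fun r => `|r| != phi) rs = (k - g)%N.
Proof.
have [z zg] := C_prim_root_exists (gcd_supp_gt0 k_gt0).
have := count_predC (fun r => `|r| == phi) rs.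
rewrite -size_filter (perm_size (perm_dominant_roots zg)) size_map size_iota.
by rewrite size_charpoly_c_roots => size_eq; rewrite -{1}size_eq addKn.
Qed.

Lemma power_sum_dominant_split N :
  power_sum rs N = (if (g %| N)%N then g%:R * phi ^+ N else 0) +
                   \sum_(r <- rs | `|r| != phi) r ^+ N.
Proof.
have [z zg] := C_prim_root_exists (gcd_supp_gt0 k_gt0).
rewrite /power_sum (bigID (fun r => `|r| == phi)) /=; congr (_ + _).
rewrite -big_filter (perm_big _ (perm_dominant_roots zg)) big_map.
rewrite (eq_bigr (fun j => phi ^+ N * (z ^+ N) ^+ j)) => [|j _]; last first.
  by rewrite exprMn exprAC.
have -> : iota 0 g = index_iota 0 g by rewrite /index_iota subn0.
rewrite -mulr_sumr big_mkord sum_prim_root_expr //.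
by case: ifP; rewrite ?mulr0 // mulrC.
Qed.

End CharPolyC.

Theorem mainTheorem12 (k : nat) (c : nat -> nat) (rs : seq algC) (phi : algC)
  (hk : (1 <= k)%N) (hc0 : (1 <= c 0%N)%N)
  (hrs : charpoly_c k c = \prod_(r <- rs) ('X - r%:P))
  (hphi_pos : 0 < phi) (hphi_root : root (charpoly_c k c) phi) :
  let g := gcd_supp k c in
  ((k = g) -> forall N : nat, (0 < N)%N ->
     (~~ (g %| N)%N -> power_sum rs N = 0) /\
     ((g %| N)%N -> g%:R * phi ^+ N - power_sum rs N = 0)) /\
  (forall psi : algC, psi \in rs -> `|psi| < phi ->
     (forall eta, eta \in rs -> `|eta| < phi -> `|eta| <= `|psi|) ->
     forall N : nat, (0 < N)%N ->
       (~~ (g %| N)%N -> `|power_sum rs N| <= (k - g)%:R * `|psi| ^+ N) /\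
       ((g %| N)%N -> `|g%:R * phi ^+ N - power_sum rs N| <= (k - g)%:R * `|psi| ^+ N)).
Proof.
move=> g.
have split_N := power_sum_dominant_split hk hc0 hphi_pos hphi_root hrs.
have count_sub := count_subdominant_roots hk hc0 hphi_pos hphi_root hrs.
split=> [kg N _ | psi _ _ psi_max N _].
  have sub0 : \sum_(r <- rs | `|r| != phi) r ^+ N = 0.
    by rewrite big_hasC // has_count count_sub {1}kg subnn.
  by split=> gN; rewrite split_N sub0 addr0 ?(negbTE gN) ?gN // subrr.
have sub_le : `|\sum_(r <- rs | `|r| != phi) r ^+ N| <= (k - g)%:R * `|psi| ^+ N.
  rewrite -count_sub; apply: norm_sum_expr_le => r r_rs r_sub.
  exact: psi_max r_rs (norm_subdominant_root_lt hk hc0 hphi_pos hphi_root hrs r_rs r_sub).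
by split=> gN; rewrite split_N ?(negbTE gN) ?gN ?add0r // opprD addNKr normrN.
Qed.
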